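(* For all $n\ge 0$, $a(n)\equiv \lfloor n\varphi\rfloor \pmod 2$.
   Context: $\varphi=(1+\sqrt5)/2$. Let $(F_n)_{n\ge 0}$ be the Fibonacci numbers: $F_0=0$, $F_1=1$, $F_n=F_{n-1}+F_{n-2}$ for $n\ge 2$. Define $(a(n))_{n\ge 0}$ (OEIS A105774) by $a(0)=0$, $a(1)=1$, and for $n\ge 2$, $a(n)=F_{j+1}-a(n-F_j)$, where $j\ge 2$ is the unique index with $F_j<n\le F_{j+1}$. *)

From Stdlib Require Import Reals Lia ZArith Arith.
Open Scope R_scope.

Fixpoint fib (n : nat) : nat :=
  match n with
  | O => 0
  | S m => match m with O => 1 | S k => (fib m + fib k)%nat end
  end.

Fixpoint fibidx_aux (fuel j n : nat) : nat :=
  match fuel with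
  | O => j
  | S f => if Nat.leb n (fib (S j)) then j else fibidx_aux f (S j) n
  end.

(* For n >= 2: the unique j >= 2 with F_j < n <= F_{j+1}
   (search from j = 2; F_(n+1) >= n guarantees termination within n steps). *)
Definition fibidx (n : nat) : nat := fibidx_aux n 2 n.

(* a fuel n: the sequence A105774, computed with fuel (fuel >= n suffices,
   since n - F_j < n). *)
Fixpoint a_aux (fuel n : nat) : nat :=
  match fuel with
  | O => 0
  | S f =>
    match n with
    | O => 0
    | S O => 1
    | _ => let j := fibidx n in (fib (S j) - a_aux f (n - fib j))%nat
    end
  end.

Definition a (n : nat) : nat := a_aux n n.

Definition phi : R := (1 + sqrt 5) / 2.

(* the floor function: Stdlib's Int_part satisfies
   IZR (Int_part r) <= r < IZR (Int_part r) + 1 (lemma base_Int_part). *)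
Definition floorR (x : R) : Z := Int_part x.

From Stdlib Require Import Reals ZArith Lra Lia.
Open Scope R_scope.

(* Write n = m + F_j with F_j < n <= F_(j+1), so 1 <= m <= F_(j-1) and
   a(n) = F_(j+1) - a(m).  Since F_j phi = F_(j+1) - d with
   |d| = 1 / (F_(j+1) - F_j (1 - phi)) (Cassini's identity), and the norm
   bound |c - m phi| (c - m (1 - phi)) = |c^2 - c m - m^2| >= 1 keeps every
   integer c farther than |d| from m phi, we get
   floor(n phi) = floor(m phi) + F_(j+1).  Both sides of the congruence
   therefore obey the same recursion modulo 2. *)

Lemma fib_SS k : fib (S (S k)) = (fib (S k) + fib k)%nat.
Proof. reflexivity. Qed.

Lemma fib_le_S k : (fib k <= fib (S k))%nat.
Proof. destruct k as [|k]; [simpl; lia | rewrite fib_SS; lia]. Qed.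

Lemma fib_pos k : (1 <= k)%nat -> (1 <= fib k)%nat.
Proof.
  induction k as [|k IH]; intro Hk; [lia|].
  destruct k as [|k]; [simpl; lia|].
  pose proof (fib_le_S k). rewrite fib_SS. lia.
Qed.

Lemma le_fib_S k : (k <= fib (S k))%nat.
Proof.
  induction k as [|k IH]; [simpl; lia|].
  rewrite fib_SS. destruct k as [|k]; [simpl; lia|].
  pose proof (fib_pos (S k)). lia.
Qed.

Lemma fib_S_le_double k : (1 <= k)%nat -> (fib (S k) <= 2 * fib k)%nat.
Proof.
  intro Hk. destruct k as [|k]; [lia|].
  rewrite fib_SS. pose proof (fib_le_S k). lia.
Qed.

Lemma cassini k : let X := INR (fib (S (S k))) in let Y := INR (fib (S k)) in
  Rabs (X * X - X * Y - Y * Y) = 1.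
Proof.
  cbv zeta. induction k as [|k IH].
  - simpl. unfold Rabs. destruct Rcase_abs; lra.
  - rewrite (fib_SS (S k)), plus_INR, <- IH, <- Rabs_Ropp. f_equal. ring.
Qed.

Lemma fibidx_aux_spec fuel j n : (2 <= j)%nat -> (fib j < n)%nat ->
  (n <= fib (S (j + fuel)))%nat ->
  let j' := fibidx_aux fuel j n in (2 <= j' /\ fib j' < n <= fib (S j'))%nat.
Proof.
  revert j. induction fuel as [|f IH]; intros j Hj Hf Hn; cbn [fibidx_aux].
  - rewrite Nat.add_0_r in Hn. lia.
  - destruct (Nat.leb n (fib (S j))) eqn:E.
    + apply Nat.leb_le in E. lia.
    + apply Nat.leb_gt in E. apply IH; [lia | lia |].
      rewrite Nat.add_succ_comm. exact Hn.
Qed.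

Lemma fibidx_spec n : (2 <= n)%nat ->
  (2 <= fibidx n /\ fib (fibidx n) < n <= fib (S (fibidx n)))%nat.
Proof.
  intro Hn. apply fibidx_aux_spec; [lia | simpl; lia |].
  pose proof (le_fib_S (2 + n)). lia.
Qed.

Lemma a_aux_SS f n : (2 <= n)%nat ->
  a_aux (S f) n = (fib (S (fibidx n)) - a_aux f (n - fib (fibidx n)))%nat.
Proof. destruct n as [|[|n]]; [lia | lia | reflexivity]. Qed.

Lemma a_aux_fuel f g n : (n <= f)%nat -> (n <= g)%nat -> a_aux f n = a_aux g n.
Proof.
  revert g n. induction f as [|f IH]; intros g n Hf Hg.
  - replace n with 0%nat by lia. destruct g; reflexivity.
  - destruct (Nat.lt_ge_cases n 2) as [Hn | Hn].
    + destruct n as [|[|n]], g as [|g]; reflexivity || lia.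
    + destruct g as [|g]; [lia|]. rewrite !a_aux_SS by exact Hn. f_equal.
      destruct (fibidx_spec n Hn) as [Hj _]. pose proof (fib_pos (fibidx n)).
      apply IH; lia.
Qed.

Lemma a_rec n : (2 <= n)%nat ->
  a n = (fib (S (fibidx n)) - a (n - fib (fibidx n)))%nat.
Proof.
  intro Hn. destruct (fibidx_spec n Hn) as [Hj _]. pose proof (fib_pos (fibidx n)).
  unfold a at 1. destruct n as [|n]; [lia|].
  rewrite a_aux_SS by exact Hn. f_equal. apply a_aux_fuel; lia.
Qed.

Lemma a_le_double n : (a n <= 2 * n)%nat.
Proof.
  destruct (Nat.lt_ge_cases n 2) as [Hn | Hn].
  - destruct n as [|[|n]]; [unfold a; simpl; lia | unfold a; simpl; lia | lia].
  - rewrite a_rec by exact Hn. destruct (fibidx_spec n Hn) as [Hj [Hjn _]].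
    pose proof (fib_S_le_double (fibidx n)). lia.
Qed.

Lemma a_fib_decomp n : (2 <= n)%nat -> exists i m,
  n = (m + fib (S (S i)))%nat /\ (1 <= m <= fib (S i))%nat /\
  a n = (fib (S (S (S i))) - a m)%nat.
Proof.
  intro Hn. destruct (fibidx_spec n Hn) as [Hj Hjn]. rewrite (a_rec n Hn).
  destruct (fibidx n) as [|[|i]]; [lia | lia |].
  exists i, (n - fib (S (S i)))%nat.
  rewrite (fib_SS (S i)) in Hjn. lia.
Qed.

Lemma phi_sq : phi * phi = phi + 1.
Proof.
  assert (H := sqrt_sqrt 5 ltac:(lra)). unfold phi. nra.
Qed.

Lemma phi_bounds : 1.6 < phi < 1.7.
Proof.
  assert (H := sqrt_sqrt 5 ltac:(lra)). pose proof (sqrt_pos 5). unfold phi. nra.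
Qed.

Lemma golden_norm c m : (c - m * phi) * (c - m * (1 - phi)) = c * c - c * m - m * m.
Proof.
  transitivity (c * c - c * m - m * m * (phi * phi - phi)); [ring | rewrite phi_sq; ring].
Qed.

(* Descent (c, m) -> (m, c - m): the norm changes sign only. *)
Lemma golden_norm_neq0 (c : Z) (m : nat) : (0 <= c)%Z -> (1 <= m)%nat ->
  (c * c - c * Z.of_nat m - Z.of_nat m * Z.of_nat m <> 0)%Z.
Proof.
  revert c. induction m as [m IH] using lt_wf_ind. intros c Hc Hm H.
  assert (Hcm : (Z.of_nat m < c < 2 * Z.of_nat m)%Z) by nia.
  apply (IH (Z.to_nat (c - Z.of_nat m))) with (c := Z.of_nat m); lia.
Qed.

Lemma golden_approx_lower (c : Z) (m : nat) : (0 <= c)%Z -> (1 <= m)%nat ->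
  1 <= Rabs (IZR c - INR m * phi) * (IZR c - INR m * (1 - phi)).
Proof.
  intros Hc Hm. pose proof phi_bounds.
  assert (0 <= IZR c) by (apply IZR_le; exact Hc).
  assert (0 <= INR m) by apply pos_INR.
  rewrite <- (Rabs_pos_eq (IZR c - INR m * (1 - phi))) by nra.
  rewrite <- Rabs_mult, golden_norm, INR_IZR_INZ, <- !mult_IZR, <- !minus_IZR, <- abs_IZR.
  apply IZR_le. pose proof (golden_norm_neq0 c m Hc Hm). lia.
Qed.

Lemma golden_approx_far (c : Z) (m : nat) d E : (0 <= c)%Z -> (1 <= m)%nat ->
  Rabs d * E = 1 -> IZR c - INR m * (1 - phi) < E -> Rabs d < Rabs (INR m * phi - IZR c).
Proof.
  intros Hc Hm HdE HcE. pose proof (golden_approx_lower c m Hc Hm) as Hlow.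
  pose proof phi_bounds.
  assert (0 <= IZR c) by (apply IZR_le; exact Hc).
  assert (0 < INR m * (phi - 1)) by (apply Rmult_lt_0_compat; [apply (lt_INR 0) |]; lia || lra).
  set (e := IZR c - INR m * (1 - phi)) in *.
  assert (He : 0 < e) by (unfold e; lra).
  assert (Hd : 0 < Rabs d).
  { destruct (Rabs_pos d) as [Hd | Hd]; [exact Hd | rewrite <- Hd in HdE; lra]. }
  rewrite Rabs_minus_sym. apply Rnot_le_lt. intro Hle.
  assert (Rabs (IZR c - INR m * phi) * e <= Rabs d * e) by (apply Rmult_le_compat_r; lra).
  assert (Rabs d * e < Rabs d * E) by (apply Rmult_lt_compat_l; lra).
  lra.
Qed.

Lemma Int_part_sub_small x d :
  Rabs d < Rabs (x - IZR (Int_part x)) -> Rabs d < Rabs (IZR (Int_part x) + 1 - x) ->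
  Int_part (x - d) = Int_part x.
Proof.
  destruct (base_Int_part x) as [H1 H2]. intros Hlo Hhi.
  symmetry. apply Int_part_spec.
  revert Hlo Hhi. unfold Rabs; repeat destruct Rcase_abs; intros; lra.
Qed.

Lemma Int_part_add_Z x (z : Z) : Int_part (x + IZR z) = (Int_part x + z)%Z.
Proof.
  destruct (base_Int_part x). symmetry. apply Int_part_spec. rewrite plus_IZR. lra.
Qed.

Lemma Int_part_shift_fib i m : (1 <= m <= fib (S i))%nat ->
  Int_part (INR (m + fib (S (S i))) * phi) =
  (Int_part (INR m * phi) + Z.of_nat (fib (S (S (S i)))))%Z.
Proof.
  intro Hm. pose proof phi_bounds.
  destruct i as [|i].
  { replace m with 1%nat by (simpl in Hm; lia). simpl.
    rewrite <- (Int_part_spec (1 * phi) 1), <- (Int_part_spec ((1 + 1) * phi) 3);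
      [reflexivity | lra | lra]. }
  pose proof (cassini (S (S i))) as Cas. cbv zeta in Cas.
  pose proof (fib_pos (S i) ltac:(lia)).
  set (f1 := INR (fib (S (S i)))) in *. set (f0 := INR (fib (S i))) in *.
  set (F := f1 + f0). set (F' := F + f1).
  assert (HF : INR (fib (S (S (S i)))) = F) by (rewrite fib_SS, plus_INR; reflexivity).
  assert (HF' : INR (fib (S (S (S (S i))))) = F') by (rewrite fib_SS, plus_INR, HF; reflexivity).
  rewrite HF, HF' in Cas.
  assert (Hf0 : 1 <= f0) by (apply (le_INR 1); lia).
  assert (Hm1 : 1 <= INR m) by (apply (le_INR 1); lia).
  assert (Hm2 : INR m <= f1) by (apply le_INR; lia).
  set (x := INR m * phi). set (k := Int_part x).
  destruct (base_Int_part x) as [Hk1 Hk2]. fold k in Hk1, Hk2.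
  set (d := F' - F * phi). set (E := F' - F * (1 - phi)).
  assert (HdE : Rabs d * E = 1).
  { rewrite <- (Rabs_pos_eq E) by (unfold E, F', F; nra).
    rewrite <- Rabs_mult. unfold d, E. rewrite golden_norm. exact Cas. }
  assert (Hfar : forall c : Z, (0 <= c)%Z -> IZR c <= x + 1 -> Rabs d < Rabs (x - IZR c)).
  { intros c Hc Hcx. apply golden_approx_far with E; [exact Hc | lia | exact HdE |].
    assert (0 <= (2 * phi - 1) * (f1 - INR m)) by (apply Rmult_le_pos; lra).
    assert (0 <= (2 - phi) * (f1 - 1)) by (apply Rmult_le_pos; lra).
    assert (0 <= (f0 - 1) * phi) by (apply Rmult_le_pos; lra).
    unfold E, F', F; unfold x in Hcx; lra. }
  assert (Hk0 : (0 <= k)%Z).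
  { assert (0 < x) by (apply Rmult_lt_0_compat; lra).
    assert (-1 < k)%Z by (apply lt_IZR; lra). lia. }
  replace (INR (m + fib (S (S (S i)))) * phi)
    with (x - d + IZR (Z.of_nat (fib (S (S (S (S i)))))))
    by (rewrite <- INR_IZR_INZ, plus_INR, HF, HF'; unfold x, d; ring).
  rewrite Int_part_add_Z, Int_part_sub_small; fold k; [reflexivity | apply Hfar; [exact Hk0 | lra] |].
  rewrite (Rabs_minus_sym (IZR k + 1)), <- plus_IZR.
  apply Hfar; [lia | rewrite plus_IZR; lra].
Qed.

Lemma Z_sub_mod2 x y : ((x - y) mod 2 = (x + y) mod 2)%Z.
Proof.
  replace (x - y)%Z with (x + y + (- y) * 2)%Z by ring. apply Z_mod_plus_full.
Qed.

Theorem proposition17 : forall n : nat,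
  Z.modulo (Z.of_nat (a n)) 2 = Z.modulo (floorR (INR n * phi)) 2.
Proof.
  unfold floorR. intro n. induction n as [n IH] using lt_wf_ind.
  pose proof phi_bounds.
  destruct (Nat.lt_ge_cases n 2) as [Hn | Hn].
  - destruct n as [|[|n]]; [| | lia].
    + rewrite <- (Int_part_spec (INR 0 * phi) 0); [reflexivity | simpl; lra].
    + rewrite <- (Int_part_spec (INR 1 * phi) 1); [reflexivity | simpl; lra].
  - destruct (a_fib_decomp n Hn) as (i & m & -> & Hm & Ha).
    assert (Ham : (a m <= fib (S (S (S i))))%nat).
    { pose proof (a_le_double m). pose proof (fib_le_S (S i)).
      rewrite (fib_SS (S i)). lia. }
    rewrite Ha, Int_part_shift_fib, Nat2Z.inj_sub, Z_sub_mod2 by assumption.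
    pose proof (fib_pos (S (S i)) ltac:(lia)).
    rewrite Zplus_mod, IH, <- Zplus_mod, Z.add_comm by lia. reflexivity.
Qed.
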